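(* Let $G$ be a two-directional orthogonal ray graph with given bipartition $(U,V)$ and without twins. Then $G$ has exactly one normalized representation if and only if $G$ is a chain graph.
   Context: All graphs are finite and simple. $G$ is a bipartite graph with a fixed bipartition $(U,V)$; $N(x)$ denotes the open neighborhood of $x$. Standing assumption: $G$ has no twins, i.e. no two distinct vertices $x\neq y$ with $N(x)=N(y)$. A representation of $G$ is a pair $(<_x,<_y)$ of linear orders on $V(G)$ such that for all $u\in U$ and $v\in V$: $uv\in E(G)$ iff ($u<_x v$ and $u<_y v$). $G$ is a two-directional orthogonal ray graph if it has a representation. A representation $(<_x,<_y)$ is normalized if: (a) for all $u_1,u_2\in U$: ($u_1<_x u_2$ and $u_1<_y u_2$) iff $N(u_1)\supsetneq N(u_2)$; (b) for all $v_1,v_2\in V$: ($v_1<_x v_2$ and $v_1<_y v_2$) iff $N(v_1)\subsetneq N(v_2)$; (c) for all $u\in U$, $v\in V$: ($v<_x u$ and $v<_y u$) iff for every $v'\in N(u)$, $N(v)\subsetneq N(v')$. Two normalized representations are different if they differ as pairs of linear orders. A bipartite graph with bipartition $(U,V)$ is a chain graph if the neighborhoods $\{N(u):u\in U\}$ are linearly ordered by inclusion (equivalently, there is a linear order $<_U$ on $U$ with $u_1<_U u_2 \iff N(u_1)\subseteq N(u_2)$). *)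

From mathcomp Require Import all_boot.
Set Implicit Arguments. Unset Strict Implicit. Unset Printing Implicit Defensive.

(* A finite simple graph on the vertex type T is given by an edge relation e;
   the fixed bipartition (U,V) is given by the predicate inU (U = inU, V = its
   complement). *)

Definition nbhd (T : finType) (e : rel T) (x : T) : {set T} := [set y | e x y].

Definition bipartite_graph (T : finType) (e : rel T) (inU : pred T) : Prop :=
  symmetric e /\ irreflexive e /\ (forall x y, e x y -> inU x != inU y).

Definition twin_free (T : finType) (e : rel T) : Prop :=
  forall x y, nbhd e x = nbhd e y -> x = y.

Definition strict_linear_order (T : finType) (r : rel T) : Prop :=
  irreflexive r /\ transitive r /\ (forall x y, x != y -> r x y || r y x).

Definition is_representation (T : finType) (e : rel T) (inU : pred T)
    (lx ly : rel T) : Prop :=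
  strict_linear_order lx /\ strict_linear_order ly /\
  (forall u v, inU u -> ~~ inU v -> e u v = lx u v && ly u v).

(* normalized representation, conditions (a), (b), (c) *)
Definition normalized (T : finType) (e : rel T) (inU : pred T)
    (lx ly : rel T) : Prop :=
  is_representation e inU lx ly /\
  (forall u1 u2, inU u1 -> inU u2 ->
     lx u1 u2 && ly u1 u2 = (nbhd e u2 \proper nbhd e u1)) /\
  (forall v1 v2, ~~ inU v1 -> ~~ inU v2 ->
     lx v1 v2 && ly v1 v2 = (nbhd e v1 \proper nbhd e v2)) /\
  (forall u v, inU u -> ~~ inU v ->
     (lx v u && ly v u <->
      (forall v', v' \in nbhd e u -> nbhd e v \proper nbhd e v'))).

Definition two_dorg (T : finType) (e : rel T) (inU : pred T) : Prop :=
  exists lx ly, is_representation e inU lx ly.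

Definition chain_graph (T : finType) (e : rel T) (inU : pred T) : Prop :=
  forall u1 u2, inU u1 -> inU u2 ->
    nbhd e u1 \subset nbhd e u2 \/ nbhd e u2 \subset nbhd e u1.

(* G has exactly one normalized representation (pairs of linear orders are
   compared extensionally) *)
Definition unique_normalized (T : finType) (e : rel T) (inU : pred T) : Prop :=
  exists lx ly, normalized e inU lx ly /\
    (forall lx' ly', normalized e inU lx' ly' -> lx' =2 lx /\ ly' =2 ly).

From mathcomp Require Import all_boot.
Set Implicit Arguments. Unset Strict Implicit.

(* Swapping the two orders of a normalized representation yields a normalized
   representation, so uniqueness forces lx = ly; condition (a) then says that
   any two distinct U-vertices have strictly nested neighbourhoods.
   Conversely, in a chain graph the neighbourhoods on each side are nested, and
   the representation condition together with (a), (b), (c) forces lx /\ ly to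
   contain one fixed strict linear order [chain_order]; a strict linear order
   contained in another one equals it, so lx = ly = [chain_order]. *)

Lemma in_nbhd (T : finType) (e : rel T) x y : (y \in nbhd e x) = e x y.
Proof. by rewrite inE. Qed.

Lemma strict_linear_order_asym (T : finType) (r : rel T) x y :
  strict_linear_order r -> r x y -> r y x = false.
Proof.
move=> [irr [tr _]] rxy; apply/negP => ryx.
by have := tr _ _ _ rxy ryx; rewrite irr.
Qed.

Lemma strict_linear_order_sub_eq (T : finType) (r s : rel T) :
  strict_linear_order r -> strict_linear_order s ->
  (forall x y, r x y -> s x y) -> s =2 r.
Proof.
move=> r_slo s_slo sub_rs x y.
case rxy: (r x y); first exact: sub_rs.
have [->|neq_xy] := eqVneq x y; first by case: s_slo => irr _; rewrite irr.
have := r_slo.2.2 _ _ neq_xy; rewrite rxy /= => ryx.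
exact: strict_linear_order_asym s_slo (sub_rs _ _ ryx).
Qed.

Lemma proper_of_nested (T : finType) (A B : {set T}) a :
  A \subset B \/ B \subset A -> a \in A -> a \notin B -> B \proper A.
Proof.
case=> sub_AB aA aNB; first by rewrite (subsetP sub_AB) in aNB.
by rewrite properE sub_AB; apply/subsetPn; exists a.
Qed.

Lemma proper_total_of_nested (T : finType) (A B : {set T}) :
  A != B -> A \subset B \/ B \subset A -> (A \proper B) || (B \proper A).
Proof.
by move=> neq_AB [sub|sub]; rewrite !properEneq sub ?neq_AB // eq_sym neq_AB orbT.
Qed.

Lemma normalized_swap (T : finType) (e : rel T) (inU : pred T) lx ly :
  normalized e inU lx ly -> normalized e inU ly lx.
Proof.
case=> [[lx_slo [ly_slo rep]] [normU [normV normUV]]].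
split; first by do 2!split=> //; move=> u v uU vV; rewrite andbC rep.
split; first by move=> u1 u2 u1U u2U; rewrite andbC normU.
split; first by move=> v1 v2 v1V v2V; rewrite andbC normV.
by move=> u v uU vV; rewrite andbC; apply: normUV.
Qed.

Lemma unique_normalized_chain_graph (T : finType) (e : rel T) (inU : pred T) :
  unique_normalized e inU -> chain_graph e inU.
Proof.
case=> lx [ly [norm uniq]].
have [eq_lx_ly _] := uniq _ _ (normalized_swap norm).
case: norm => [[lx_slo _] [normU _]].
have lxE a b : inU a -> inU b -> lx a b = (nbhd e b \proper nbhd e a).
  by move=> aU bU; rewrite -normU // eq_lx_ly andbb.
move=> u1 u2 u1U u2U; have [->|neq_u12] := eqVneq u1 u2; first by left.
by have /orP[] := lx_slo.2.2 _ _ neq_u12; rewrite lxE // => /proper_sub; [right|left].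
Qed.

Section ChainGraph.

Variables (T : finType) (e : rel T) (inU : pred T).
Hypotheses (Gbip : bipartite_graph e inU) (Gtw : twin_free e)
  (Gchain : chain_graph e inU).

Let e_sym : symmetric e := Gbip.1.

Lemma edge_side x y : e x y -> inU y = ~~ inU x.
Proof. by move/Gbip.2.2; case: (inU x); case: (inU y). Qed.

Lemma chain_graph_nestedV v1 v2 : ~~ inU v1 -> ~~ inU v2 ->
  nbhd e v1 \subset nbhd e v2 \/ nbhd e v2 \subset nbhd e v1.
Proof.
move=> v1V v2V.
case sub12: (nbhd e v1 \subset nbhd e v2); first by left.
case sub21: (nbhd e v2 \subset nbhd e v1); first by right.
move/negbT/subsetPn: sub12 => [u1]; rewrite !in_nbhd => e_v1u1 Ne_v2u1.
move/negbT/subsetPn: sub21 => [u2]; rewrite !in_nbhd => e_v2u2 Ne_v1u2.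
have u1U : inU u1 by rewrite (edge_side e_v1u1) v1V.
have u2U : inU u2 by rewrite (edge_side e_v2u2) v2V.
case: (Gchain u1U u2U) => /subsetP sub.
- by have := sub v1; rewrite !in_nbhd e_sym e_v1u1 e_sym (negbTE Ne_v1u2) => /(_ isT).
- by have := sub v2; rewrite !in_nbhd e_sym e_v2u2 e_sym (negbTE Ne_v2u1) => /(_ isT).
Qed.

Lemma nonadj_nbhd_proper u v v' : inU u -> ~~ inU v -> ~~ e u v -> e u v' ->
  nbhd e v \proper nbhd e v'.
Proof.
move=> uU vV Ne_uv e_uv'.
have v'V : ~~ inU v' by rewrite (edge_side e_uv') uU.
apply: (proper_of_nested (a := u)); first exact: chain_graph_nestedV.
- by rewrite in_nbhd e_sym.
- by rewrite in_nbhd e_sym.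
Qed.

Lemma below_nbhd_iff_nonadj u v : inU u -> ~~ inU v ->
  (forall v', v' \in nbhd e u -> nbhd e v \proper nbhd e v') <-> ~~ e u v.
Proof.
move=> uU vV; split=> [below|Ne_uv v']; last first.
  by rewrite in_nbhd; apply: nonadj_nbhd_proper.
by apply/negP => e_uv; have := below v; rewrite in_nbhd e_uv properxx => /(_ isT).
Qed.

Definition chain_order : rel T :=
  fun x y =>
    if inU x then (if inU y then nbhd e y \proper nbhd e x else e x y)
    else (if inU y then ~~ e y x else nbhd e x \proper nbhd e y).

Lemma chain_order_irr : irreflexive chain_order.
Proof. by move=> x; rewrite /chain_order; case: (inU x); rewrite properxx. Qed.

Lemma chain_order_trans : transitive chain_order.
Proof.
move=> y x z; rewrite /chain_order.
case xU: (inU x); case yU: (inU y); case zU: (inU z).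
- by move=> Nyx Nzy; apply: proper_trans Nzy Nyx.
- by move=> /proper_sub/subsetP Nyx e_yz; have := Nyx z; rewrite !in_nbhd => ->.
- move=> e_xy Ne_zy; apply: (proper_of_nested (a := y)); first exact: Gchain.
  + by rewrite in_nbhd.
  + by rewrite in_nbhd.
- by move=> e_xy /proper_sub/subsetP Nyz; have := Nyz x; rewrite !in_nbhd !(e_sym _ x) => ->.
- move=> Ne_yx /proper_sub/subsetP Nzy; apply: contra Ne_yx => e_zx.
  by rewrite -in_nbhd; apply: Nzy; rewrite in_nbhd.
- by move=> Ne_yx e_yz; apply: (nonadj_nbhd_proper yU); rewrite ?xU.
- move=> /proper_sub/subsetP Nxy Ne_zy; apply: contra Ne_zy => e_zx.
  by rewrite e_sym -in_nbhd; apply: Nxy; rewrite in_nbhd e_sym.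
- by move=> Nxy Nyz; apply: proper_trans Nxy Nyz.
Qed.

Lemma chain_order_total x y : x != y -> chain_order x y || chain_order y x.
Proof.
rewrite -(inj_eq Gtw) /chain_order => neq_xy.
case xU: (inU x); case yU: (inU y).
- by rewrite orbC; apply: proper_total_of_nested; last exact: Gchain.
- by rewrite e_sym orbN.
- by rewrite e_sym orNb.
- by apply: proper_total_of_nested; last apply: chain_graph_nestedV; rewrite ?xU ?yU.
Qed.

Lemma chain_order_slo : strict_linear_order chain_order.
Proof.
split; first exact: chain_order_irr.
split; [exact: chain_order_trans | exact: chain_order_total].
Qed.

Lemma chain_order_normalized : normalized e inU chain_order chain_order.
Proof.
have ord := chain_order_slo.
split.
  by do !split=> //; move=> u v uU /negbTE vV; rewrite /chain_order uU vV andbb.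
split; first by move=> u1 u2 u1U u2U; rewrite /chain_order u1U u2U andbb.
split; first by move=> v1 v2 /negbTE v1V /negbTE v2V; rewrite /chain_order v1V v2V andbb.
move=> u v uU vV; rewrite andbb /chain_order uU (negbTE vV).
by apply: iff_sym; apply: below_nbhd_iff_nonadj.
Qed.

Lemma normalized_sub_chain_order lx ly : normalized e inU lx ly ->
  forall x y, chain_order x y -> lx x y && ly x y.
Proof.
move=> [[_ [_ rep]] [normU [normV normUV]]] x y; rewrite /chain_order.
case xU: (inU x); case yU: (inU y).
- by rewrite normU.
- by rewrite -rep ?yU.
- move=> Ne_yx; apply/(normUV _ _ yU (negbT xU)).
  exact/(below_nbhd_iff_nonadj yU (negbT xU)).
- by rewrite normV ?xU ?yU.
Qed.

Lemma chain_graph_unique_normalized : unique_normalized e inU.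
Proof.
exists chain_order, chain_order; split; first exact: chain_order_normalized.
move=> lx ly norm; have [[lx_slo [ly_slo _]] _] := norm.
have sub := normalized_sub_chain_order norm.
by split; apply: strict_linear_order_sub_eq chain_order_slo _ _ => // x y /sub/andP[].
Qed.

End ChainGraph.

Theorem theorem1 (T : finType) (e : rel T) (inU : pred T) :
  bipartite_graph e inU -> twin_free e -> two_dorg e inU ->
  (unique_normalized e inU <-> chain_graph e inU).
Proof.
move=> Gbip Gtw _; split; first exact: unique_normalized_chain_graph.
exact: chain_graph_unique_normalized.
Qed.
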